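(* Consider the faulty-starter delivery problem described in the context, with finisher starting position $(x,y)\neq(0,0)$, $y\ge 0$, and assume $(x,y)\in\overline{D}(1,1)$, i.e. $\sqrt{(x-1)^2+y^2}\le1$. Then the competitive ratio of $\mathcal{A}_d$ is $$\mathrm{CR}_{\mathcal{A}_d}=\begin{cases}\dfrac{x^2+y^2+x}{x\left(1+\sqrt{x^2+y^2}\right)} & \text{if }(x,y)\in\overline{D}(1/2,1/2),\\[2mm] 1+\dfrac{y^2}{x(\sqrt{x}+1)^2} & \text{otherwise.}\end{cases}$$
   Context: Setting. In the plane let $S=(0,0)$ and $T=(1,0)$. A ''starter'' drone carrying a package starts at $S$ at time $0$ and moves at unit speed along $\overline{ST}$ towards $T$. At an unknown time $t\in[0,1]$ it fails and stays forever at $(t,0)$ with the package (at time $s$ the package is at $(\min\{s,t\},0)$). A ''finisher'' drone starts at time $0$ at $P=(x,y)$ with $y\ge0$, moves at unit speed and can stop and turn instantaneously. The package can be handed over only when the drones are co-located; it is delivered at the first time the finisher, carrying the package, is at $T$. An online algorithm $\mathcal{A}$ specifies the finisher's trajectory using only $(x,y)$; $A(t)$ is its delivery time for fail time $t$. $\mathrm{Opt}(t)=\max\{1,\sqrt{(x-t)^2+y^2}+1-t\}$ is the optimal offline delivery time. $\mathrm{CR}_{\mathcal{A}}(t)=A(t)/\mathrm{Opt}(t)$ and $\mathrm{CR}_{\mathcal{A}}=\sup_{0\le t\le1}\mathrm{CR}_{\mathcal{A}}(t)$. $\overline{D}(c,r)$ denotes the closed disk of radius $r$ centered at $(c,0)$.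 Algorithm $\mathcal{A}_d$ (for $x>0$): let $d=(x^2+y^2)/(2x)$ (the point $(d,0)$ satisfies $\sqrt{(x-d)^2+y^2}=d$); the finisher goes straight to $(d,0)$, then moves along the segment towards $S$ until it finds the package, then goes to $T$. *)

From Stdlib Require Import Reals.
Open Scope R_scope.

Definition dist2 (a1 a2 b1 b2 : R) : R := sqrt ((a1 - b1) ^ 2 + (a2 - b2) ^ 2).

Definition in_disk (c r x y : R) : Prop := dist2 x y c 0 <= r.

(* Optimal offline delivery time for fail time t. *)
Definition Opt (x y t : R) : R := Rmax 1 (dist2 x y t 0 + 1 - t).

Definition dpt (x y : R) : R := (x ^ 2 + y ^ 2) / (2 * x).

(* Delivery time of A_d for fail time t: the finisher walks straight from
   P=(x,y) to (d,0); at time dist(P,(d,0)) (= d) the package is at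
   (min t d, 0), so the finisher walks back d - min t d along the segment
   towards S to reach it, and then carries it to T, a further 1 - min t d. *)
Definition A_d (x y t : R) : R :=
  let d := dpt x y in
  dist2 x y d 0 + (d - Rmin t d) + (1 - Rmin t d).

Definition CR_t (x y t : R) : R := A_d x y t / Opt x y t.

Definition CR_set (x y : R) : R -> Prop :=
  fun r => exists t, 0 <= t <= 1 /\ r = CR_t x y t.

Definition CR_is (x y v : R) : Prop := is_lub (CR_set x y) v.

(* Write d for the turning point. For t >= d the finisher meets the starter
   exactly at (d,0), so the delivery time is 1 and the ratio is at most 1. For
   t <= d the ratio is (2d + 1 - 2t) / (|P - (t,0)| + 1 - t), so
   CR <= V amounts to 2d + 1 - 2t - V (1 - t) <= V |P - (t,0)| on [0, d].
   Inside the disk of radius 1/2 this is proved by squaring, the difference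
   of squares being t times a nonnegative affine function of t, with
   equality at t = 0. Outside it, with x = s^2, the left-hand side is the
   scalar product of (2 - V, 2y / (s (1 + s))) with P - (t,0), and the
   first vector has length exactly V; Cauchy-Schwarz gives the bound, with
   equality at the fail time where the two vectors are parallel. *)

From Stdlib Require Import Reals Lra Psatz.
Open Scope R_scope.

Lemma Rdiv_le_of_le_mul (a b c : R) : 0 < c -> a <= b * c -> a / c <= b.
Proof.
  intros Hc H. apply Rmult_le_reg_r with c; [exact Hc|].
  unfold Rdiv. rewrite Rmult_assoc, Rinv_l by lra. lra.
Qed.

Lemma le_mul_sqrt_of_sq (L V z : R) :
  0 <= V -> 0 <= z -> L ^ 2 <= V ^ 2 * z -> L <= V * sqrt z.
Proof.
  intros HV Hz H. apply Rsqr_incr_0_var.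
  - unfold Rsqr. rewrite <- (pow2_sqrt z) in H by exact Hz. nra.
  - apply Rmult_le_pos; [exact HV | apply sqrt_pos].
Qed.

Lemma sum_sq_nonneg (u w : R) : 0 <= u ^ 2 + w ^ 2.
Proof. apply Rplus_le_le_0_compat; apply pow2_ge_0. Qed.

Lemma dist2_nonneg (a1 a2 b1 b2 : R) : 0 <= dist2 a1 a2 b1 b2.
Proof. apply sqrt_pos. Qed.

Lemma dist2_sq (a1 a2 b1 b2 : R) :
  dist2 a1 a2 b1 b2 ^ 2 = (a1 - b1) ^ 2 + (a2 - b2) ^ 2.
Proof. apply pow2_sqrt, sum_sq_nonneg. Qed.

Lemma in_disk_iff (c r x y : R) :
  0 <= r -> in_disk c r x y <-> (x - c) ^ 2 + y ^ 2 <= r ^ 2.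
Proof.
  intros Hr. unfold in_disk.
  assert (Hsq := dist2_sq x y c 0). assert (H0 := dist2_nonneg x y c 0).
  rewrite Rminus_0_r in Hsq. split; intros H; [nra|].
  destruct (Rle_or_lt (dist2 x y c 0) r); [assumption | nra].
Qed.

Lemma lagrange_identity (b c u w : R) :
  (b * u + c * w) ^ 2 + (b * w - c * u) ^ 2 = (b ^ 2 + c ^ 2) * (u ^ 2 + w ^ 2).
Proof. ring. Qed.

Lemma dot_le_norm_mul (b c u w V : R) :
  0 <= V -> V ^ 2 = b ^ 2 + c ^ 2 -> b * u + c * w <= V * sqrt (u ^ 2 + w ^ 2).
Proof.
  intros HV HVbc. apply le_mul_sqrt_of_sq; [exact HV | apply sum_sq_nonneg |].
  rewrite HVbc, <- lagrange_identity.
  assert (H := pow2_ge_0 (b * w - c * u)). lra.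
Qed.

Lemma dot_eq_norm_mul (b c u w V : R) :
  0 <= V -> V ^ 2 = b ^ 2 + c ^ 2 -> b * w = c * u -> 0 <= b * u + c * w ->
  b * u + c * w = V * sqrt (u ^ 2 + w ^ 2).
Proof.
  intros HV HVbc Hpar Hdot.
  assert (Hsq : (b * u + c * w) ^ 2 = (V * sqrt (u ^ 2 + w ^ 2)) ^ 2).
  { rewrite Rpow_mult_distr, pow2_sqrt by apply sum_sq_nonneg.
    rewrite HVbc, <- lagrange_identity, Hpar. ring. }
  apply Rsqr_inj; [exact Hdot | apply Rmult_le_pos; [exact HV | apply sqrt_pos] |].
  unfold Rsqr. nra.
Qed.

Section TurningPoint.

Variables x y : R.
Hypothesis x_pos : 0 < x.

Local Notation d := (dpt x y).
Local Notation D t := (dist2 x y t 0).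

Lemma two_mul_dpt : 2 * x * d = x ^ 2 + y ^ 2.
Proof. unfold dpt. field. lra. Qed.

Lemma dpt_nonneg : 0 <= d.
Proof. assert (H := sum_sq_nonneg x y). assert (H2 := two_mul_dpt). nra. Qed.

Lemma dpt_le_1 : x ^ 2 + y ^ 2 <= 2 * x -> d <= 1.
Proof. intros H. assert (H2 := two_mul_dpt). nra. Qed.

Lemma dist2_dpt : D d = d.
Proof.
  apply sqrt_lem_1; [apply sum_sq_nonneg | exact dpt_nonneg |].
  unfold dpt. field. lra.
Qed.

Lemma dist2_fail_sq (t : R) : D t ^ 2 = 2 * x * (d - t) + t ^ 2.
Proof. rewrite dist2_sq, Rmult_minus_distr_l, two_mul_dpt. ring. Qed.

Lemma le_dist2_of_le_dpt (t : R) : t <= d -> t <= D t.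
Proof.
  intros Ht. rewrite <- (Rmult_1_l (D t)). unfold dist2.
  apply le_mul_sqrt_of_sq; [lra | apply sum_sq_nonneg |].
  rewrite <- dist2_sq, dist2_fail_sq. nra.
Qed.

Lemma CR_t_before_dpt (t : R) :
  t <= d -> CR_t x y t = (2 * d + 1 - 2 * t) / (D t + 1 - t).
Proof.
  intros Ht. assert (HD := le_dist2_of_le_dpt t Ht). unfold CR_t, A_d, Opt.
  rewrite dist2_dpt, Rmin_left, Rmax_right by lra.
  f_equal. ring.
Qed.

Lemma CR_t_after_dpt (t : R) : d <= t -> CR_t x y t <= 1.
Proof.
  intros Ht. unfold CR_t, A_d.
  rewrite dist2_dpt, Rmin_right by exact Ht.
  apply Rdiv_le_of_le_mul; unfold Opt; assert (H := Rmax_l 1 (D t + 1 - t)); lra.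
Qed.

Lemma CR_is_of_tight_bound (V t0 : R) :
  d <= 1 -> 1 <= V -> 0 <= t0 <= d ->
  2 * d + 1 - 2 * t0 = V * (D t0 + 1 - t0) ->
  (forall t, 0 <= t <= d -> 2 * d + 1 - 2 * t <= V * (D t + 1 - t)) ->
  CR_is x y V.
Proof.
  intros Hd1 HV1 Ht0 Htight Hbound. split.
  - intros r [t [Ht ->]].
    destruct (Rle_or_lt t d) as [Htd | Htd].
    + rewrite CR_t_before_dpt by exact Htd.
      apply Rdiv_le_of_le_mul; [apply le_dist2_of_le_dpt in Htd; lra |].
      apply Hbound. lra.
    + assert (H := CR_t_after_dpt t (Rlt_le _ _ Htd)). lra.
  - intros b Hb. apply Hb. exists t0. split; [lra |].
    rewrite CR_t_before_dpt, Htight by lra.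
    field. assert (H := le_dist2_of_le_dpt t0). lra.
Qed.

End TurningPoint.

Lemma CR_is_inner (x y : R) :
  0 < x -> x ^ 2 + y ^ 2 <= x ->
  CR_is x y ((x ^ 2 + y ^ 2 + x) / (x * (1 + sqrt (x ^ 2 + y ^ 2)))).
Proof.
  intros Hx Hin.
  set (r := sqrt (x ^ 2 + y ^ 2)).
  assert (Hr2 : r ^ 2 = x ^ 2 + y ^ 2) by apply pow2_sqrt, sum_sq_nonneg.
  assert (Hr0 : 0 <= r) by apply sqrt_pos.
  assert (Hxr : x <= r) by nra.
  assert (Hd := two_mul_dpt x y Hx).
  set (V := (x ^ 2 + y ^ 2 + x) / (x * (1 + r))).
  assert (HV : V * (x * (1 + r)) = r ^ 2 + x) by (unfold V; rewrite Hr2; field; nra).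
  assert (HV1 : 1 <= V).
  { apply Rmult_le_reg_r with (x * (1 + r)); [nra |]. rewrite HV. nra. }
  assert (Hturn : 2 * dpt x y + 1 = V * (1 + r)).
  { apply Rmult_eq_reg_l with x; [nra | lra]. }
  assert (Hslope : V * (x + r) <= 2 * r).
  { assert (Hneg : (r - x) * (r ^ 2 - x) <= 0) by nra.
    apply Rmult_le_reg_r with (x * (1 + r)); nra. }
  apply (CR_is_of_tight_bound x y Hx V 0).
  - apply (dpt_le_1 x y Hx). lra.
  - exact HV1.
  - split; [lra | exact (dpt_nonneg x y Hx)].
  - assert (HD0 : dist2 x y 0 0 = r) by (unfold dist2, r; f_equal; ring).
    rewrite HD0. lra.
  - intros t Ht.
    enough (HL : V * r + (V - 2) * t <= V * dist2 x y t 0) by lra.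
    apply le_mul_sqrt_of_sq; [lra | apply sum_sq_nonneg |].
    rewrite <- dist2_sq, dist2_fail_sq by exact Hx.
    assert (Hgap : V ^ 2 * (2 * x * (dpt x y - t) + t ^ 2) - (V * r + (V - 2) * t) ^ 2
                   = t * (4 * (V - 1) * t + 2 * V * (2 * r - V * (x + r)))).
    { replace (2 * x * (dpt x y - t)) with (r ^ 2 - 2 * x * t) by nra. ring. }
    assert (0 <= t * (4 * (V - 1) * t + 2 * V * (2 * r - V * (x + r)))).
    { apply Rmult_le_pos; nra. }
    lra.
Qed.

Lemma CR_is_outer (x y : R) :
  0 < x -> x <= x ^ 2 + y ^ 2 -> x ^ 2 + y ^ 2 <= 2 * x ->
  CR_is x y (1 + y ^ 2 / (x * (sqrt x + 1) ^ 2)).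
Proof.
  intros Hx Hout Hin.
  assert (Hd1 := dpt_le_1 x y Hx Hin).
  set (s := sqrt x).
  assert (Hs : 0 < s) by (apply sqrt_lt_R0; exact Hx).
  assert (Hxs : x = s ^ 2) by (unfold s; rewrite pow2_sqrt; lra).
  clearbody s. subst x.
  set (V := 1 + y ^ 2 / (s ^ 2 * (s + 1) ^ 2)).
  set (b := 2 - V).
  set (c := 2 * y / (s * (1 + s))).
  assert (HV1 : 1 <= V).
  { assert (0 <= y ^ 2 / (s ^ 2 * (s + 1) ^ 2)).
    { apply Rle_mult_inv_pos; [apply pow2_ge_0 | nra]. }
    unfold V. lra. }
  assert (HVbc : V ^ 2 = b ^ 2 + c ^ 2) by (unfold b, c, V; field; lra).
  assert (Hdot : forall t, 2 * dpt (s ^ 2) y + 1 - 2 * t - V * (1 - t)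
                           = b * (s ^ 2 - t) + c * (y - 0)).
  { intros t. unfold b, c, V, dpt. field. lra. }
  set (ts := s ^ 2 - b * s * (1 + s) / 2).
  apply (CR_is_of_tight_bound (s ^ 2) y ltac:(nra) V ts).
  - exact Hd1.
  - exact HV1.
  - assert (Hts : ts * (2 * s * (s + 1)) = s ^ 4 - s ^ 2 + y ^ 2)
      by (unfold ts, b, V; field; lra).
    assert (Hdts : (dpt (s ^ 2) y - ts) * (2 * s ^ 2 * (s + 1)) = s ^ 4 + s ^ 3 + y ^ 2)
      by (unfold ts, b, V, dpt; field; lra).
    split.
    + apply Rmult_le_reg_r with (2 * s * (s + 1)); [nra |].
      rewrite Rmult_0_l, Hts. nra.
    + enough (0 <= dpt (s ^ 2) y - ts) by lra.
      apply Rmult_le_reg_r with (2 * s ^ 2 * (s + 1)); [nra |].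
      rewrite Rmult_0_l, Hdts. nra.
  - enough (Heq : b * (s ^ 2 - ts) + c * (y - 0) = V * dist2 (s ^ 2) y ts 0)
      by (assert (H := Hdot ts); nra).
    apply dot_eq_norm_mul; [lra | exact HVbc | unfold ts, c; field; lra |].
    replace (b * (s ^ 2 - ts) + c * (y - 0))
      with (b ^ 2 * (s * (1 + s)) / 2 + c ^ 2 * (s * (1 + s)) / 2)
      by (unfold ts, c; field; lra).
    assert (0 <= b ^ 2 * (s * (1 + s))) by (apply Rmult_le_pos; [apply pow2_ge_0 | nra]).
    assert (0 <= c ^ 2 * (s * (1 + s))) by (apply Rmult_le_pos; [apply pow2_ge_0 | nra]).
    lra.
  - intros t _.
    assert (Hle := dot_le_norm_mul b c (s ^ 2 - t) (y - 0) V ltac:(lra) HVbc).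
    rewrite <- Hdot in Hle. unfold dist2. lra.
Qed.

Theorem theorem3 (x y : R) :
  (x, y) <> (0, 0) -> 0 <= y -> in_disk 1 1 x y ->
  (in_disk (1/2) (1/2) x y ->
     CR_is x y ((x ^ 2 + y ^ 2 + x) / (x * (1 + sqrt (x ^ 2 + y ^ 2))))) /\
  (~ in_disk (1/2) (1/2) x y ->
     CR_is x y (1 + y ^ 2 / (x * (sqrt x + 1) ^ 2))).
Proof.
  intros Hne _ Hdisk.
  apply in_disk_iff in Hdisk; [| lra].
  assert (Hbig : x ^ 2 + y ^ 2 <= 2 * x) by nra.
  assert (Hx : 0 < x).
  { destruct (Rtotal_order x 0) as [Hneg | [Hx0 | Hpos]]; [nra | | exact Hpos].
    subst x. assert (y = 0) by nra. subst y. contradiction. }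
  assert (Hsmall : in_disk (1/2) (1/2) x y <-> x ^ 2 + y ^ 2 <= x).
  { rewrite in_disk_iff by lra. split; intros; nra. }
  split; intros Hin.
  - apply CR_is_inner; [exact Hx | apply Hsmall, Hin].
  - apply CR_is_outer; [exact Hx | | exact Hbig].
    rewrite Hsmall in Hin. lra.
Qed.
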